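(* Consider the networked $SIRS$-$V_o$ system without media actuator described in the context, and assume the opinion graph (with adjacency matrix $A$) is strongly connected. At any healthy state equilibrium (an equilibrium with $x^*=0_n$), the opinions reach consensus at $o_i^*=0$ for all $i\in[n]$.
   Context: There are $n$ nodes. All parameters are real and nonnegative: $a_{ij},\beta_{ij},\gamma_i,\omega_i,\delta_i,\eta^{\min}_{ij},\Delta\eta_{ij}$. $A=[a_{ij}]$ is the weighted adjacency matrix of the directed opinion graph (edge $j\to i$ iff $a_{ij}>0$). Let $B=[\beta_{ij}]$, $H_{\min}=[\eta^{\min}_{ij}]$, $\Delta H=[\Delta\eta_{ij}]$; for a square matrix $M$, $k_i[M]=\sum_jM_{ij}$, $\widetilde K[M]=\mathrm{diag}(k_i[M])$, $L[M]=\widetilde K[M]-M$; $\widetilde G=\mathrm{diag}(\gamma_i)$, $\widetilde W=\mathrm{diag}(\omega_i)$, $\widetilde D=\mathrm{diag}(\delta_i)$, $H(o)=\mathrm{diag}(o)\Delta H+H_{\min}$. State $(o,s,x,r,v)$ with $\widetilde S=\mathrm{diag}(s)$, $\widetilde R=\mathrm{diag}(r)$, dynamics $\dot o=A(x-o)-2L[A]o$, $\dot s=\widetilde Dv-\widetilde S(Bx+H(o)v)+\widetilde Wr$, $\dot x=\widetilde SBx-\widetilde Gx$, $\dot r=\widetilde Gx-\widetilde Wr-\widetilde RH(o)v$, $\dot v=(\widetilde S+\widetilde R)H(o)v-\widetilde Dv$. A healthy state equilibrium is an equilibrium with $x^*=0_n$. *)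

From mathcomp Require Import all_boot all_order all_algebra.
Set Implicit Arguments. Unset Strict Implicit. Unset Printing Implicit Defensive.
Import Order.TTheory GRing.Theory Num.Theory.
Local Open Scope ring_scope.

Section SIRSVo.
Variables (R : realFieldType) (n : nat).

Definition kdeg (M : 'M[R]_n) (i : 'I_n) : R := \sum_(j < n) M i j.
Definition Ktil (M : 'M[R]_n) : 'M[R]_n := diag_mx (\row_i kdeg M i).
Definition Lap (M : 'M[R]_n) : 'M[R]_n := Ktil M - M.

Definition diagc (u : 'cV[R]_n) : 'M[R]_n := diag_mx u^T.

Definition Hmat (DH Hmin : 'M[R]_n) (o : 'cV[R]_n) : 'M[R]_n :=
  diagc o *m DH + Hmin.

Definition f_o (A : 'M[R]_n) (o x : 'cV[R]_n) : 'cV[R]_n :=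
  A *m (x - o) - 2%:R *: (Lap A *m o).
Definition f_s (B DH Hmin : 'M[R]_n) (gam om del : 'cV[R]_n)
    (o s x r v : 'cV[R]_n) : 'cV[R]_n :=
  diagc del *m v - diagc s *m (B *m x + Hmat DH Hmin o *m v) + diagc om *m r.
Definition f_x (B : 'M[R]_n) (gam : 'cV[R]_n) (s x : 'cV[R]_n) : 'cV[R]_n :=
  diagc s *m B *m x - diagc gam *m x.
Definition f_r (DH Hmin : 'M[R]_n) (gam om : 'cV[R]_n)
    (o x r v : 'cV[R]_n) : 'cV[R]_n :=
  diagc gam *m x - diagc om *m r - diagc r *m (Hmat DH Hmin o *m v).
Definition f_v (DH Hmin : 'M[R]_n) (del : 'cV[R]_n)
    (o s r v : 'cV[R]_n) : 'cV[R]_n :=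
  (diagc s + diagc r) *m (Hmat DH Hmin o *m v) - diagc del *m v.

Definition is_equilibrium (A B DH Hmin : 'M[R]_n) (gam om del : 'cV[R]_n)
    (o s x r v : 'cV[R]_n) : Prop :=
  [/\ f_o A o x = 0,
      f_s B DH Hmin gam om del o s x r v = 0,
      f_x B gam s x = 0,
      f_r DH Hmin gam om o x r v = 0 &
      f_v DH Hmin del o s r v = 0].

Definition is_healthy_equilibrium A B DH Hmin gam om del (o s x r v : 'cV[R]_n) :=
  is_equilibrium A B DH Hmin gam om del o s x r v /\ x = 0.

Definition opinion_edge (A : 'M[R]_n) : rel 'I_n := fun j i => 0 < A i j.

Definition strongly_connected (A : 'M[R]_n) : Prop :=
  forall i j : 'I_n, connect (opinion_edge A) i j.

Definition nonneg_mx (M : 'M[R]_n) : Prop := forall i j, 0 <= M i j.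
Definition nonneg_cv (u : 'cV[R]_n) : Prop := forall i, 0 <= u i 0.

End SIRSVo.

(** At a healthy equilibrium the opinion dynamics reduce to [A o = 2 K[A] o]:
    every opinion equals twice the weighted average of its in-neighbours'
    opinions.  Strong connectivity gives every node a positive in-degree, so at
    a node of maximal [|o_i|] this forces [2 |o_i| <= |o_i|], i.e. [o = 0]. *)
From mathcomp Require Import all_boot all_order all_algebra.
From mathcomp Require Import lra.

Set Implicit Arguments.
Unset Strict Implicit.
Unset Printing Implicit Defensive.
Import Order.TTheory GRing.Theory Num.Theory.
Local Open Scope ring_scope.

Lemma connect_in_edge (T : finType) (e : rel T) (i j : T) :
  j != i -> connect e j i -> exists k, e k i.
Proof.
move=> neq_ji /connectP [p e_p i_last].
case/lastP: p e_p i_last => [|p k] e_p i_last; first by rewrite i_last eqxx in neq_ji.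
rewrite last_rcons in i_last; subst k.
by move: e_p; rewrite rcons_path => /andP[_ e_ki]; exists (last j p).
Qed.

Lemma exists_ord_neq (n : nat) (i : 'I_n) : (1 < n)%N -> exists j : 'I_n, j != i.
Proof.
move=> n_gt1; have [-> | neq_i1] := eqVneq i (Ordinal n_gt1).
  by exists (Ordinal (ltnW n_gt1)).
by exists (Ordinal n_gt1); rewrite eq_sym.
Qed.

Lemma norm_weighted_sum_le (R : numDomainType) (I : finType) (a u : I -> R) (b : R) :
  (forall j, 0 <= a j) -> (forall j, `|u j| <= b) ->
  `|\sum_j a j * u j| <= (\sum_j a j) * b.
Proof.
move=> a_ge0 u_le; apply: (le_trans (ler_norm_sum _ _ _)).
rewrite big_distrl /=; apply: ler_sum => j _.
by rewrite normrM ger0_norm // ler_wpM2l.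
Qed.

Section OpinionEquilibrium.
Variables (R : realFieldType) (n : nat).
Implicit Types (A : 'M[R]_n) (o : 'cV[R]_n).

Lemma Ktil_mulmxE A o i : (Ktil A *m o) i 0 = kdeg A i * o i 0.
Proof. by rewrite /Ktil mul_diag_mx !mxE. Qed.

Lemma f_o_healthy A o : f_o A o 0 = A *m o - 2%:R *: (Ktil A *m o).
Proof.
rewrite /f_o /Lap sub0r mulmxN mulmxBl.
move: (A *m o) (Ktil A *m o) => Ao Ko.
by apply/matrixP => i j; rewrite !mxE; lra.
Qed.

Lemma kdeg_gt0 A i :
  nonneg_mx A -> (1 < n)%N -> strongly_connected A -> 0 < kdeg A i.
Proof.
move=> A_ge0 n_gt1 A_sc; have [j neq_ji] := exists_ord_neq i n_gt1.
have [k A_ik] := connect_in_edge neq_ji (A_sc j i).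
rewrite /kdeg (bigD1 k) //=; apply: (lt_le_trans A_ik).
by rewrite lerDl sumr_ge0.
Qed.

Lemma amplified_average_eq0 A o (c : R) :
  nonneg_mx A -> (forall i, 0 < kdeg A i) -> 1 < c ->
  A *m o = c *: (Ktil A *m o) -> o = 0.
Proof.
move=> A_ge0 kdeg_pos c_gt1 Ao; apply/matrixP => i0 j0; rewrite ord1 mxE.
have [m _ max_m] := @arg_maxP _ _ _ i0 xpredT (fun j => `|o j 0|) isT.
have k_gt0 := kdeg_pos m.
have o_m_le : c * kdeg A m * `|o m 0| <= kdeg A m * `|o m 0|.
  have := norm_weighted_sum_le (A_ge0 m) (fun j => max_m j isT).
  move/matrixP: Ao => /(_ m 0); rewrite mxE => ->; rewrite mxE Ktil_mulmxE.
  rewrite -/(kdeg A m) !normrM mulrA (ger0_norm (ltW k_gt0)).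
  by rewrite ger0_norm // (le_trans ler01 (ltW c_gt1)).
have o_m0 : `|o m 0| <= 0 by rewrite -(pmulr_rle0 _ k_gt0); nra.
by apply/eqP; rewrite -normr_le0 (le_trans (max_m i0 isT)).
Qed.

End OpinionEquilibrium.

Theorem lemma4 (R : realFieldType) (n : nat)
  (A B Hmin DH : 'M[R]_n) (gam om del : 'cV[R]_n)
  (hA : nonneg_mx A) (hB : nonneg_mx B) (hHmin : nonneg_mx Hmin)
  (hDH : nonneg_mx DH) (hgam : nonneg_cv gam) (hom : nonneg_cv om)
  (hdel : nonneg_cv del)
  (hn : (1 < n)%N) (hsc : strongly_connected A)
  (o s x r v : 'cV[R]_n) :
  is_healthy_equilibrium A B DH Hmin gam om del o s x r v ->
  forall i : 'I_n, o i 0 = 0.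
Proof.
move=> [[eq_o _ _ _ _] x0] i; rewrite x0 f_o_healthy in eq_o.
have balance : A *m o = 2%:R *: (Ktil A *m o) by apply/eqP; rewrite -subr_eq0 eq_o.
have -> : o = 0.
  apply: (amplified_average_eq0 hA _ _ balance) => [j|]; first exact: kdeg_gt0.
  by rewrite ltr1n.
by rewrite mxE.
Qed.
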